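(* Let $n\ge 2$ be odd. Then there exists a matching mechanism that is resolute and symmetric (i.e. $G^*$-symmetric).
   Context: Fix $n\ge 2$, $W=\{1,\dots,n\}$ (women), $M=\{n+1,\dots,2n\}$ (men), $I=W\cup M$. Permutations compose right-to-left. A preference profile is a function $p$ on $I$ assigning to each $x\in W$ a linear order $p(x)$ on $M$ and to each $y\in M$ a linear order $p(y)$ on $W$; $\mathcal{P}$ is the set of preference profiles. A matching is a permutation $\mu$ of $I$ with $\mu(W)=M$, $\mu(M)=W$ and $\mu(\mu(z))=z$ for all $z\in I$; $\mathcal{M}$ is the set of matchings. Let $G^*=\{\varphi\in\mathrm{Sym}(I):\{\varphi(W),\varphi(M)\}=\{W,M\}\}$. For a linear order $R$ on $X\subseteq I$ and $\varphi\in\mathrm{Sym}(I)$, $\varphi R$ is the relation on $\varphi(X)$ with $(a,b)\in\varphi R$ iff $(\varphi^{-1}(a),\varphi^{-1}(b))\in R$. For $p\in\mathcal{P}$ and $\varphi\in G^*$, $p^\varphi\in\mathcal{P}$ is defined by $p^\varphi(z)=\varphi\,p(\varphi^{-1}(z))$. For a permutation $\mu$, $\mu^\varphi=\varphi\mu\varphi^{-1}$, and for a set $S$ of permutations $S^\varphi=\{\mu^\varphi:\mu\in S\}$. A matching mechanism is a correspondence $F$ from $\mathcal{P}$ to $\mathcal{M}$. $F$ is resolute if $|F(p)|=1$ for all $p$. For $U\subseteq G^*$, $F$ is $U$-symmetric if $F(p^\varphi)=F(p)^\varphi$ for all $p\in\mathcal{P}$, $\varphi\in U$; symmetric means $G^*$-symmetric.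 *)

(* Agents are 'I_(2n) = {0,...,2n-1}; women are i < n,
   men are n <= i < 2n (a 0-based relabelling of {1..n} and {n+1..2n}). *)
From mathcomp Require Import all_boot all_order all_fingroup.
Set Implicit Arguments. Unset Strict Implicit. Unset Printing Implicit Defensive.

Local Open Scope group_scope.

Section Matching.
Variable n : nat.

Definition agent := 'I_(2 * n).

Definition women : {set agent} := [set i : agent | (i < n)%N].
Definition men : {set agent} := [set i : agent | (n <= i)%N].

Definition relI := {set agent * agent}.

Definition linear_order_on (X : {set agent}) (R : relI) : Prop :=
  [/\ forall a b, (a, b) \in R -> (a \in X) && (b \in X),
      forall a, a \in X -> (a, a) \in R,
      forall a b, (a, b) \in R -> (b, a) \in R -> a = b,
      forall a b c, (a, b) \in R -> (b, c) \in R -> (a, c) \in R &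
      forall a b, a \in X -> b \in X -> ((a, b) \in R) || ((b, a) \in R)].

Definition profile := {ffun agent -> relI}.

Definition is_profile (p : profile) : Prop :=
  (forall x, x \in women -> linear_order_on men (p x)) /\
  (forall y, y \in men -> linear_order_on women (p y)).

Definition is_matching (mu : {perm agent}) : Prop :=
  [/\ mu @: women = men, mu @: men = women & forall z, mu (mu z) = z].

Definition Gstar : {set {perm agent}} :=
  [set phi : {perm agent} |
     ((phi @: women == women) && (phi @: men == men))
  || ((phi @: women == men) && (phi @: men == women))].

Definition rel_act (phi : {perm agent}) (R : relI) : relI :=
  [set ab : agent * agent | ((phi^-1) ab.1, (phi^-1) ab.2) \in R].

Definition profile_act (p : profile) (phi : {perm agent}) : profile :=
  [ffun z => rel_act phi (p ((phi^-1) z))].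

(* mu^phi = phi ∘ mu ∘ phi^-1 (right-to-left composition).  In MathComp,
   (s * t) x = t (s x), so this is phi^-1 * mu * phi. *)
Definition perm_conj (mu phi : {perm agent}) : {perm agent} :=
  phi^-1 * mu * phi.

Definition set_conj (S : {set {perm agent}}) (phi : {perm agent})
  : {set {perm agent}} := [set perm_conj mu phi | mu in S].

(* A matching mechanism: a correspondence from P to M.  We model it as a
   function on all candidate profiles whose values on P are sets of matchings
   (values outside P are irrelevant). *)
Definition mechanism (F : profile -> {set {perm agent}}) : Prop :=
  forall p, is_profile p -> forall mu, mu \in F p -> is_matching mu.

Definition resolute (F : profile -> {set {perm agent}}) : Prop :=
  forall p, is_profile p -> #|F p| = 1%N.

Definition U_symmetric (U : {set {perm agent}})
  (F : profile -> {set {perm agent}}) : Prop :=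
  forall p phi, is_profile p -> phi \in U ->
    F (profile_act p phi) = set_conj (F p) phi.

Definition symmetric_mech F : Prop := U_symmetric Gstar F.

End Matching.

(* Choose one profile q in every G*-orbit and a matching mu_q that commutes
   with the stabiliser H_q of q in G*; transporting mu_q along the orbit then
   gives a well-defined, resolute, G*-symmetric mechanism.

   Such a mu_q exists when n is odd.  H_q acts freely on the agents: an
   element fixing q and an agent x is an automorphism of the linear order
   q(x), so it fixes the whole other side, and then everybody.  Every element
   of G* preserves or swaps the two sides.  If some element of H_q swaps them,
   its order is even, so H_q contains an involution t (Cauchy); t swaps the
   sides too, since otherwise <t> would act freely on the n women and 2 would
   divide n.  Then matching h w with h t w, orbit by orbit, is H_q-equivariant.
   If H_q preserves the sides, all its orbits have size |H_q|, so orbits of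
   women and of men can be paired off and matched by h w <-> h v. *)

From mathcomp Require Import all_boot all_fingroup pgroup cyclic.
Set Implicit Arguments. Unset Strict Implicit. Unset Printing Implicit Defensive.

Local Open Scope group_scope.

Lemma imset_permC (T : finType) (g : {perm T}) (A : {set T}) :
  g @: (~: A) = ~: (g @: A).
Proof. by rewrite -!preim_permV preimsetC. Qed.

Section Sidewise.
Variables (T : finType) (W : {set T}).

Definition sidewise (b : bool) (g : {perm T}) :=
  forall x, (g x \in W) = b (+) (x \in W).

Lemma sidewise1 : sidewise false 1.
Proof. by move=> x; rewrite perm1. Qed.

Lemma sidewiseM b c g h :
  sidewise b g -> sidewise c h -> sidewise (b (+) c) (g * h).
Proof. by move=> gb hc x; rewrite permM hc gb addbA [c (+) b]addbC. Qed.

Lemma sidewiseV b g : sidewise b g -> sidewise b g^-1.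
Proof. by move=> gb x; rewrite -{2}(permKV g x) gb addbA addbb. Qed.

Lemma sidewiseX b g k : sidewise b g -> sidewise (odd k && b) (g ^+ k).
Proof.
move=> gb; elim: k => [|k IHk] x; first by rewrite expg0 perm1.
by rewrite expgS permM IHk gb addbA /=; case: (odd k); rewrite /= ?addbb.
Qed.

Lemma sidewiseJ b c g h : sidewise b g -> sidewise c h -> sidewise b (g ^ h).
Proof.
move=> gb hc; have := sidewiseM (sidewiseM (sidewiseV hc) gb) hc.
by rewrite conjgE mulgA addbC addbA addbb.
Qed.

Lemma sidewiseP b g : reflect (sidewise b g) (g @: W == if b then ~: W else W).
Proof.
apply: (iffP eqP) => [gW x | gb].
  rewrite -[x \in W](mem_imset _ _ (@perm_inj _ g)) gW.
  by case: b {gW} => /=; rewrite ?in_setC ?negbK.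
apply/setP => a; rewrite -preim_permV inE (sidewiseV gb).
by case: b {gb} => /=; rewrite ?in_setC.
Qed.

Lemma sidewise_opp b g x y : sidewise b g ->
  (y \in W) = (x \notin W) -> (g y \in W) = (g x \notin W).
Proof. by move=> gb yW; rewrite !gb yW {gb}; case: b; case: (x \in W). Qed.

End Sidewise.

Lemma free_card_dvd (T : finType) (K : {group {perm T}}) (A : {set T}) :
  {in K, forall (k : {perm T}) x, k x = x -> k = 1} -> [acts K, on A | 'P] ->
  #|K| %| #|A|.
Proof.
move=> freeK actA; rewrite -(acts_sum_card_orbit actA).
apply: dvdn_sum => _ /imsetP [x xA ->].
rewrite card_orbit (_ : 'C_K[x | 'P] = 1) ?indexg1 //.
apply/trivgP/subsetP => k /setIP [kK /astab1P]; rewrite /= apermE => kx.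
by rewrite (freeK k kK x kx) group1.
Qed.

Section FreeSwap.
Variables (T : finType) (W : {set T}) (H : {group {perm T}}).
Hypothesis sidewiseH : {in H, forall h, exists b, sidewise W b h}.
Hypothesis freeH : {in H, forall (h : {perm T}) x, h x = x -> h = 1}.

Definition equivariant (f : T -> T) :=
  {in H, forall (h : {perm T}) x, f (h x) = h (f x)}.

Definition swap_on (S : {set T}) (f : T -> T) :=
  [/\ involutive f, equivariant f,
      {in S, forall x, (f x \in W) = (x \notin W)} & {in ~: S, f =1 id}].

Definition balanced (S : {set T}) := #|S :&: W| = #|S :\: W|.

Lemma swap_on_stable S f x : swap_on S f -> x \in S -> f x \in S.
Proof.
case=> ff _ fW fS xS; apply: contraT => fxS.
have fx : f x = x by rewrite -{1}(fS _ (_ : f x \in ~: S)) ?inE // ff.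
by move: (fW _ xS); rewrite fx; case: (x \in W).
Qed.

Lemma swap_on_balanced S f : swap_on S f -> balanced S.
Proof.
move=> fsw; have [ff _ fW _] := fsw; rewrite /balanced.
have -> : S :\: W = f @: (S :&: W).
  apply/setP => y; rewrite inE; apply/andP/imsetP => [[yW yS] | [x]].
    by exists (f y); rewrite ?ff // inE swap_on_stable // fW // yW.
  by rewrite inE => /andP [xS xW] ->; rewrite fW // xW swap_on_stable.
by rewrite card_imset //; apply: can_inj ff.
Qed.

Lemma balancedD (O S : {set T}) :
  O \subset S -> balanced S -> balanced O -> balanced (S :\: O).
Proof.
move=> OS balS balO; rewrite /balanced.
have -> : (S :\: O) :&: W = (S :&: W) :\: (O :&: W).
  by apply/setP => x; rewrite !inE; case: (x \in O); case: (x \in W); case: (x \in S).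
have -> : (S :\: O) :\: W = (S :\: W) :\: (O :\: W).
  by apply/setP => x; rewrite !inE; case: (x \in O); case: (x \in W); case: (x \in S).
by rewrite (cardsDS (setSI _ OS)) (cardsDS (setSD _ OS)) balS balO.
Qed.

Lemma swap_on_glue (O S : {set T}) (g f : T -> T) :
  [disjoint O & S] -> [acts H, on O | 'P] -> swap_on O g -> swap_on S f ->
  swap_on (O :|: S) (fun x => if x \in O then g x else f x).
Proof.
move=> OS /actsP actO gsw fsw; have [gg geq gW gO] := gsw; have [ff feq fW fS] := fsw.
have fO x : x \notin O -> f x \notin O.
  move=> xO; case xS: (x \in S); last by rewrite fS ?inE ?xS.
  by rewrite (disjointFl OS (swap_on_stable fsw xS)).
split.
- move=> x /=; case: (boolP (x \in O)) => xO.
    by rewrite (swap_on_stable gsw xO) gg.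
  by rewrite (negPf (fO _ xO)) ff.
- move=> h hH x /=; have := actO h hH x; rewrite /= => ->.
  by case: ifP => _; [apply: geq | apply: feq].
- move=> x; rewrite inE; case: ifPn => [xO _ | xO /= xS]; first exact: gW.
  exact: fW.
- move=> x; rewrite !inE negb_or => /andP [xO xS]; rewrite (negPf xO).
  by apply: fS; rewrite inE.
Qed.

Lemma free_eq h k u : h \in H -> k \in H -> h u = k u -> h = k.
Proof.
move=> hH kH huk; have hkH : h * k^-1 \in H by rewrite groupM ?groupV.
apply/eqP; rewrite eq_mulgV1; apply/eqP; apply: (freeH hkH (_ : _ u = u)).
by rewrite permM huk permK.
Qed.

Definition transporter u x := odflt 1 [pick h in H | h u == x].

Lemma transporterE u h : h \in H -> transporter u (h u) = h.
Proof.
move=> hH; rewrite /transporter; case: pickP => [k /andP [kH /eqP] | /(_ h)] /=.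
  exact: free_eq.
by rewrite hH eqxx.
Qed.

Definition symmetric_pair w v :=
  {in H &, forall h k : {perm T}, h v = k w -> k v = h w}.

(* When the two orbits coincide only the first clause is ever used, and
   [symmetric_pair w v] is what still sends h v back to h w. *)
Definition pair_orbits w v x :=
  if x \in orbit 'P H w then transporter w x v
  else if x \in orbit 'P H v then transporter v x w else x.

Lemma swap_on_pair_orbits w v : (v \in W) = (w \notin W) -> symmetric_pair w v ->
  swap_on (orbit 'P H w :|: orbit 'P H v) (pair_orbits w v).
Proof.
move=> vW sym_wv; set O := _ :|: _.
have pair_w h : h \in H -> pair_orbits w v (h w) = h v.
  by move=> hH; rewrite /pair_orbits (mem_orbit 'P w hH) transporterE.
have pair_v h : h \in H -> pair_orbits w v (h v) = h w.
  move=> hH; rewrite /pair_orbits (mem_orbit 'P v hH) transporterE //.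
  case: ifP => // /orbitP [k kH] /=; rewrite apermE => kw.
  by rewrite -kw transporterE // (sym_wv h k hH kH (esym kw)).
have orbitO x : x \in O -> exists2 h, h \in H & (x = h w) \/ (x = h v).
  by rewrite inE => /orP [] /orbitP [h hH <-]; exists h => //; [left | right].
have actO : [acts H, on O | 'P] by rewrite actsU ?acts_orbit ?subsetT.
have pair_out x : x \notin O -> pair_orbits w v x = x.
  by rewrite inE negb_or => /andP [/negPf xw /negPf xv]; rewrite /pair_orbits xw xv.
have opp_wv h : h \in H -> (h v \in W) = (h w \notin W).
  by move=> hH; have [b hb] := sidewiseH hH; apply: sidewise_opp hb vW.
split.
- move=> x; case xO: (x \in O); last by rewrite !pair_out ?xO.
  by have [h hH [->|->]] := orbitO x xO; rewrite ?(pair_w h hH, pair_v h hH).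
- move=> h hH x; case xO: (x \in O).
    have [k kH [->|->]] := orbitO x xO; rewrite -permM.
      by rewrite pair_w ?groupM // pair_w // permM.
    by rewrite pair_v ?groupM // pair_v // permM.
  have hxO : h x \notin O by move: (actsP actO h hH x); rewrite /= apermE xO => ->.
  by rewrite !pair_out ?xO.
- move=> x xO; have [h hH [->|->]] := orbitO x xO.
    by rewrite pair_w // opp_wv.
  by rewrite pair_v // opp_wv // negbK.
- by move=> x; rewrite inE; apply: pair_out.
Qed.

Definition has_partners := forall S w, [acts H, on S | 'P] -> balanced S ->
  w \in S :&: W -> exists2 v, v \in S :\: W & symmetric_pair w v.

Lemma exists_swap_on S : has_partners -> [acts H, on S | 'P] -> balanced S ->
  exists f, swap_on S f.
Proof.
move=> partner; elim: {S}_.+1 {-2}S (ltnSn #|S|) => // k IHk S.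
rewrite ltnS => leSk actS balS.
case: (set_0Vmem (S :&: W)) => [SW0 | [w wSW]].
  have S0 : S = set0.
    apply/eqP; rewrite -(setID S W) SW0 set0U -cards_eq0.
    by rewrite -[#|_|]balS SW0 cards0.
  by exists id; split=> // x; rewrite S0 inE.
have [v vSW sym_wv] := partner S w actS balS wSW.
have [wS wW] := setIP wSW; have [vS vW] := setDP vSW.
set O := orbit 'P H w :|: orbit 'P H v.
have vwW : (v \in W) = (w \notin W) by rewrite wW (negPf vW).
have gsw := swap_on_pair_orbits vwW sym_wv.
have actO : [acts H, on O | 'P] by rewrite actsU ?acts_orbit ?subsetT.
have OS : O \subset S by rewrite subUset !acts_sub_orbit ?wS.
have ltS : #|S :\: O| < k.
  apply: leq_trans leSk; apply: proper_card; apply/properP.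
  by split; [exact: subsetDl | exists w; rewrite // !inE orbit_refl].
have [f fsw] := IHk _ ltS (actsD actS actO) (balancedD OS balS (swap_on_balanced gsw)).
have OSO : [disjoint O & S :\: O].
  by rewrite disjoints_subset; apply/subsetP => x xO; rewrite in_setC in_setD xO.
have OSOS : O :|: S :\: O = S by rewrite setDE setUIr setUCr setIT (setUidPr OS).
by eexists; rewrite -OSOS; apply: swap_on_glue OSO actO gsw fsw.
Qed.

Lemma has_partners_preserving :
  {in H, forall h, sidewise W false h} -> has_partners.
Proof.
move=> pres S w actS balS wSW.
have /card_gt0P [v vSW] : 0 < #|S :\: W| by rewrite -balS; apply/card_gt0P; exists w.
exists v => // h k hH kH hvkw; have [_ vW] := setDP vSW; have [_ wW] := setIP wSW.
by move: (pres h hH v) (pres k kH w); rewrite hvkw /= wW (negPf vW) => ->.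
Qed.

Lemma has_partners_involution t : t \in H -> t * t = 1 -> sidewise W true t ->
  has_partners.
Proof.
move=> tH tt tsw S w /actsP actS _ /setIP [wS wW]; exists (t w).
  by rewrite inE tsw wW (actS t tH w).
move=> h k hH kH hkw; have -> : k = t * h.
  by apply: (free_eq (u := w) kH); rewrite ?groupM // permM hkw.
by rewrite permM -(permM t t) tt perm1.
Qed.

Lemma preserving_or_swapping_involution : odd #|W| ->
  {in H, forall h, sidewise W false h} \/
  exists t, [/\ t \in H, t * t = 1 & sidewise W true t].
Proof.
move=> oddW.
case: (boolP [exists h in H, [exists x, (h x \in W) != (x \in W)]]); last first.
  move/exists_inPn=> pres; left=> h hH x; apply/eqP.
  by move/existsPn: (pres h hH) => /(_ x); rewrite negbK.
case/exists_inP=> s sH /existsP [x sx]; right.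
have {sx} ssw : sidewise W true s.
  by have [[] ssw //] := sidewiseH sH; move: sx; rewrite ssw eqxx.
have [w wW] : exists w, w \in W by apply/card_gt0P; rewrite odd_gt0.
have even_s : 2 %| #[s].
  rewrite dvdn2; apply/negP => odd_s.
  by move: (sidewiseX #[s] ssw w); rewrite expg_order perm1 odd_s addTb wW.
have [t tH ot] := Cauchy (isT : prime 2) (dvdn_trans even_s (order_dvdG sH)).
have tt : t * t = 1 by rewrite -expg2 -ot expg_order.
have [[] tsw] := sidewiseH tH; first by exists t.
have freet : {in <[t]>, forall (k : {perm T}) x, k x = x -> k = 1}.
  by move=> k kt; apply: freeH; apply: (subsetP _ _ kt); rewrite cycle_subG.
have actW : [acts <[t]>, on W | 'P].
  by apply/actsP => k /cycleP [i ->] y; rewrite /= apermE (sidewiseX i tsw) andbF.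
by move: (free_card_dvd freet actW); rewrite -orderE ot dvdn2 oddW.
Qed.

Lemma has_partners_odd : odd #|W| -> has_partners.
Proof.
case/preserving_or_swapping_involution => [pres | [t [tH tt tsw]]].
  exact: has_partners_preserving.
exact: has_partners_involution tH tt tsw.
Qed.

Lemma exists_equivariant_swap : odd #|W| -> #|W| = #|~: W| ->
  exists f, swap_on setT f.
Proof.
move=> oddW cardW; apply: exists_swap_on (has_partners_odd oddW) _ _.
  by apply/actsP => h _ x; rewrite !inE.
by rewrite /balanced setTI setTD.
Qed.

End FreeSwap.

Section OrbitRepresentatives.
Variables (aT : finGroupType) (X : finType) (to : {action aT &-> X}) (G : {group aT}).

Definition orbit_rep x := odflt x [pick y in orbit to G x].

Definition orbit_transporter x :=
  odflt 1 [pick g in G | to (orbit_rep x) g == x].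

Lemma orbit_rep_act x g : g \in G -> orbit_rep (to x g) = orbit_rep x.
Proof.
move=> gG; rewrite /orbit_rep orbit_act //.
by case: pickP => // /(_ x); rewrite orbit_refl.
Qed.

Lemma orbit_rep_orbit x : orbit_rep x \in orbit to G x.
Proof. by rewrite /orbit_rep; case: pickP => [// | /(_ x)]; rewrite orbit_refl. Qed.

Lemma orbit_transporterP x :
  orbit_transporter x \in G /\ to (orbit_rep x) (orbit_transporter x) = x.
Proof.
have /orbitP [g0 g0G rx] := orbit_rep_orbit x.
rewrite /orbit_transporter; case: pickP => [g /andP [gG /eqP] // | /(_ g0^-1)].
by rewrite groupV g0G -rx actK eqxx.
Qed.

Variable sel : X -> aT.
Hypothesis sel_stab : forall x, {in 'C_G[x | to], forall g, sel x ^ g = sel x}.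

Definition orbit_extension x := sel (orbit_rep x) ^ orbit_transporter x.

Lemma orbit_extensionJ x g : g \in G ->
  orbit_extension (to x g) = orbit_extension x ^ g.
Proof.
move=> gG; rewrite /orbit_extension orbit_rep_act //.
have [t0G rt0] := orbit_transporterP x.
have [t1G rt1] := orbit_transporterP (to x g); rewrite orbit_rep_act // in rt1.
set r := orbit_rep x in rt0 rt1 *; set t0 := orbit_transporter x in t0G rt0 *.
set t1 := orbit_transporter (to x g) in t1G rt1 *.
have stab : t1 * (t0 * g)^-1 \in 'C_G[r | to].
  apply/setIP; split; first by rewrite groupM ?groupV ?groupM.
  by apply/astab1P; rewrite actM rt1 -rt0 -[to (to r t0) g]actM actK.
have -> : t1 = t1 * (t0 * g)^-1 * (t0 * g) by rewrite mulgVK.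
by rewrite conjgM (sel_stab stab) conjgM.
Qed.

End OrbitRepresentatives.

Section Agents.
Variable n : nat.
Local Notation agent := (agent n).
Local Notation W := (women n).
Local Notation M := (men n).

Lemma menE : M = ~: W.
Proof. by apply/setP => x; rewrite !inE -leqNgt. Qed.

Lemma card_women : #|W| = n.
Proof.
have le_n2n : n <= 2 * n by rewrite leq_pmull.
rewrite (_ : W = [set widen_ord le_n2n i | i : 'I_n]).
  by rewrite card_imset ?card_ord // => i j /(congr1 val) /= /val_inj.
apply/setP => x; rewrite inE; apply/idP/imsetP => [xn | [i _ ->]].
  by exists (Ordinal xn) => //; apply: val_inj.
by rewrite /= ltn_ord.
Qed.

Lemma card_men : #|M| = n.
Proof.
apply/eqP; rewrite -(eqn_add2l n) -{1}card_women menE cardsC card_ord.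
by rewrite mul2n addnn.
Qed.

Lemma gstarP phi : reflect (exists b, sidewise W b phi) (phi \in Gstar n).
Proof.
apply: (iffP idP) => [| [b /sidewiseP/eqP phiW]].
  by rewrite inE menE => /orP [] /andP [phiW _]; [exists false | exists true];
    apply/sidewiseP.
by rewrite inE menE imset_permC phiW; case: b {phiW}; rewrite ?setCK !eqxx ?orbT.
Qed.

Lemma gstar_group_set : group_set (Gstar n).
Proof.
apply/group_setP; split; first by apply/gstarP; exists false; apply: sidewise1.
move=> g h /gstarP [b gb] /gstarP [c hc]; apply/gstarP.
by exists (b (+) c); apply: sidewiseM.
Qed.

Canonical Gstar_group := Group gstar_group_set.

Lemma matchingE mu : is_matching mu <-> sidewise W true mu /\ involutive mu.
Proof.
split=> [[muW _ mumu] | [/sidewiseP/eqP muW mumu]].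
  by split=> //; apply/sidewiseP; rewrite muW menE.
by split=> //; rewrite menE ?imset_permC muW ?setCK.
Qed.

Definition matchingb (mu : {perm agent}) :=
  [&& mu @: W == M, mu @: M == W & [forall z, mu (mu z) == z]].

Lemma matchingbP mu : reflect (is_matching mu) (matchingb mu).
Proof.
apply: (iffP and3P) => [[/eqP muW /eqP muM /forallP mumu] | [muW muM mumu]].
  by split=> // z; apply/eqP.
by rewrite muW muM; split=> //; apply/forallP => z; rewrite mumu.
Qed.

Lemma perm_conjE (mu phi : {perm agent}) : perm_conj mu phi = mu ^ phi.
Proof. by rewrite conjgE mulgA. Qed.

Lemma matching_conj mu phi :
  is_matching mu -> phi \in Gstar n -> is_matching (mu ^ phi).
Proof.
move=> /matchingE [musw mumu] /gstarP [b phib]; apply/matchingE.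
split; first exact: sidewiseJ phib.
by move=> x; rewrite !conjgE !permM permK mumu permKV.
Qed.

Lemma linear_order_rel_act (X : {set agent}) (R : relI n) (phi : {perm agent}) :
  linear_order_on X R -> linear_order_on (phi @: X) (rel_act phi R).
Proof.
have memX a : (a \in phi @: X) = ((phi^-1) a \in X) by rewrite -preim_permV inE.
case=> Rsub Rrefl Rantisym Rtrans Rtotal; split.
- by move=> a b; rewrite inE !memX => /Rsub.
- by move=> a; rewrite memX inE => /Rrefl.
- move=> a b; rewrite !inE /= => Rab Rba.
  exact: (perm_inj (Rantisym _ _ Rab Rba)).
- by move=> a b c; rewrite !inE /=; apply: Rtrans.
- by move=> a b; rewrite !memX !inE; apply: Rtotal.
Qed.

Definition opposite_side (z : agent) : {set agent} :=
  [set y | (y \in W) != (z \in W)].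

Lemma in_opposite_side y z : (y \in opposite_side z) = ((y \in W) != (z \in W)).
Proof. by rewrite inE. Qed.

Lemma opposite_sideE z : opposite_side z = if z \in W then M else W.
Proof.
apply/setP => y; rewrite menE in_set.
by case: (z \in W); rewrite ?in_setC; case: (y \in W).
Qed.

Lemma is_profileE p :
  is_profile p <-> forall z, linear_order_on (opposite_side z) (p z).
Proof.
split=> [[pW pM] z | pz]; first rewrite opposite_sideE.
  by case: ifP => zW; [apply: pW | apply: pM; rewrite menE in_setC zW].
split=> z zS; move: (pz z); rewrite opposite_sideE ?zS //.
by move: zS; rewrite menE in_setC => /negPf ->.
Qed.

Lemma opposite_side_sidewise b phi z :
  sidewise W b phi -> phi @: opposite_side z = opposite_side (phi z).
Proof.
move=> phib; apply/setP => a; rewrite -preim_permV [LHS]inE !in_opposite_side.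
by rewrite (sidewiseV phib) phib; case: b {phib}; case: (a \in W); case: (z \in W).
Qed.

Lemma rel_act1 (R : relI n) : rel_act 1 R = R.
Proof. by apply/setP => -[a b]; rewrite inE /= invg1 !perm1. Qed.

Lemma rel_actM (R : relI n) g h : rel_act (g * h) R = rel_act h (rel_act g R).
Proof. by apply/setP => -[a b]; rewrite !inE /= invMg !permM. Qed.

Lemma profile_act1 (p : profile n) : profile_act p 1 = p.
Proof. by apply/ffunP => z; rewrite ffunE invg1 perm1 rel_act1. Qed.

Lemma profile_actM (p : profile n) g h :
  profile_act p (g * h) = profile_act (profile_act p g) h.
Proof. by apply/ffunP => z; rewrite !ffunE invMg permM rel_actM. Qed.

Definition profile_action := TotalAction profile_act1 profile_actM.

Lemma profile_act_profile (p : profile n) phi :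
  is_profile p -> phi \in Gstar n -> is_profile (profile_act p phi).
Proof.
move=> /is_profileE pp /gstarP [b phib]; apply/is_profileE => z.
rewrite ffunE -[z in opposite_side z](permKV phi z).
by rewrite -(opposite_side_sidewise _ phib); apply: linear_order_rel_act.
Qed.

Lemma linear_order_lower_card_lt (X : {set agent}) (R : relI n) a b :
  linear_order_on X R -> (a, b) \in R -> a != b ->
  #|[set c | (c, a) \in R]| < #|[set c | (c, b) \in R]|.
Proof.
case=> Rsub Rrefl Rantisym Rtrans _ Rab neq_ab; apply/proper_card/properP.
split; first by apply/subsetP => c; rewrite !inE => Rca; apply: Rtrans Rca Rab.
exists b; first by rewrite inE Rrefl //; case/andP: (Rsub _ _ Rab).
by rewrite inE; apply: contra neq_ab => Rba; rewrite (Rantisym _ _ Rab Rba).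
Qed.

Lemma linear_order_auto_id (X : {set agent}) (R : relI n) (g : {perm agent}) :
  linear_order_on X R -> (forall a b, ((g a, g b) \in R) = ((a, b) \in R)) ->
  {in X, forall a, g a = a}.
Proof.
move=> RX gR a aX; have [Rsub Rrefl _ _ Rtotal] := RX.
have lower_g c : #|[set d | (d, g c) \in R]| = #|[set d | (d, c) \in R]|.
  rewrite -(card_imset [set d | (d, c) \in R] (@perm_inj _ g)).
  by apply: eq_card => d; rewrite -preim_permV !inE -[in RHS]gR permKV.
have gaX : g a \in X.
  have Rgaga : (g a, g a) \in R by rewrite gR Rrefl.
  by case/andP: (Rsub _ _ Rgaga).
apply/eqP; apply: contraT => neq_ga.
case/orP: (Rtotal _ _ aX gaX) => R_ga.
  move: (linear_order_lower_card_lt RX R_ga).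
  by rewrite eq_sym lower_g ltnn => /(_ neq_ga).
by move: (linear_order_lower_card_lt RX R_ga neq_ga); rewrite lower_g ltnn.
Qed.

Lemma stabilizer_fixes_opposite_side (q : profile n) h x : is_profile q ->
  h \in 'C[q | profile_action] -> h x = x -> {in opposite_side x, forall a, h a = a}.
Proof.
move=> /is_profileE qp /astab1P /= qh hx a ax.
have hVx : h^-1 x = x by rewrite -{1}hx permK.
have autq c d : ((h^-1 c, h^-1 d) \in q x) = ((c, d) \in q x).
  by rewrite -[in RHS]qh ffunE inE /= hVx.
by have hVa := linear_order_auto_id (qp x) autq ax; rewrite -{1}hVa permKV.
Qed.

Lemma stabilizer_free (q : profile n) : 0 < n -> is_profile q ->
  {in 'C[q | profile_action], forall (h : {perm agent}) x, h x = x -> h = 1}.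
Proof.
move=> n_gt0 qp h hq x hx.
have [y yx] : exists y, y \in opposite_side x.
  by apply/card_gt0P; rewrite opposite_sideE; case: ifP; rewrite ?card_men ?card_women.
have fix_x := stabilizer_fixes_opposite_side qp hq hx.
have fix_y := stabilizer_fixes_opposite_side qp hq (fix_x y yx).
apply/permP => a; rewrite perm1.
case: (boolP (a \in opposite_side x)) => [/fix_x // | ax].
apply: fix_y; move: yx ax; rewrite !in_opposite_side.
by case: (a \in W); case: (x \in W); case: (y \in W).
Qed.

Lemma exists_invariant_matching (H : {group {perm agent}}) : odd n ->
  H \subset Gstar n -> {in H, forall (h : {perm agent}) x, h x = x -> h = 1} ->
  exists2 mu, is_matching mu & {in H, forall h, mu ^ h = mu}.
Proof.
move=> odd_n HG freeH.
have sidewiseH : {in H, forall h, exists b, sidewise W b h}.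
  by move=> h /(subsetP HG) /gstarP.
have oddW : odd #|W| by rewrite card_women.
have cardW : #|W| = #|~: W| by rewrite -menE card_men card_women.
have [f [ff feq fW _]] := exists_equivariant_swap sidewiseH freeH oddW cardW.
exists (perm (can_inj ff)).
  by apply/matchingE; split=> [x | x]; rewrite !permE ?fW ?inE ?ff.
move=> h hH; apply/permP => x.
by rewrite -[x](permKV h) permJ !permE feq ?groupV ?permKV.
Qed.

End Agents.

Section Mechanism.
Variable n : nat.

(* The default [1] is never a matching, but it is invariant under every
   conjugation, so [invariant_matchingJ] holds for every [q]. *)
Definition invariant_matching (q : profile n) : {perm agent n} :=
  odflt 1 [pick mu | matchingb mu &&
    [forall h in 'C_(Gstar n)[q | profile_action n], mu ^ h == mu]].

Lemma invariant_matchingJ q :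
  {in 'C_(Gstar n)[q | profile_action n], forall h,
    invariant_matching q ^ h = invariant_matching q}.
Proof.
move=> h hq; rewrite /invariant_matching.
case: pickP => [mu /andP [_ /forall_inP mu_inv] | _]; last exact: conj1g.
exact/eqP/mu_inv.
Qed.

Lemma invariant_matching_matching q :
  odd n -> is_profile q -> is_matching (invariant_matching q).
Proof.
move=> odd_n qp; set H := 'C_(Gstar n)[q | profile_action n].
have freeH : {in H, forall (h : {perm agent n}) x, h x = x -> h = 1}.
  by move=> h /setIP [_ hq]; apply: stabilizer_free (odd_gt0 odd_n) qp _ hq.
have [mu mu_m mu_inv] := exists_invariant_matching odd_n (subsetIl _ _) freeH.
rewrite /invariant_matching; case: pickP => [mu' /andP [/matchingbP] // | /(_ mu)].
move/negbT/nandP => [/matchingbP // | /forall_inPn [h hH]].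
by rewrite mu_inv ?eqxx.
Qed.

Definition canonical_matching : profile n -> {perm agent n} :=
  orbit_extension (profile_action n) (Gstar_group n) invariant_matching.

Lemma canonical_matching_matching p :
  odd n -> is_profile p -> is_matching (canonical_matching p).
Proof.
move=> odd_n pp; have [tG _] := orbit_transporterP (profile_action n) (Gstar_group n) p.
apply: matching_conj tG; apply: invariant_matching_matching => //.
have /orbitP [g gG <-] := orbit_rep_orbit (profile_action n) (Gstar_group n) p.
exact: profile_act_profile.
Qed.

Lemma canonical_matchingJ p phi : phi \in Gstar n ->
  canonical_matching (profile_act p phi) = canonical_matching p ^ phi.
Proof. by move=> phiG; apply: (orbit_extensionJ invariant_matchingJ). Qed.

End Mechanism.

Unset Implicit Arguments.
Set Strict Implicit.

Theorem theorem3 (n : nat) (hn : (2 <= n)%N) (hodd : odd n) :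
  exists F : profile n -> {set {perm agent n}},
    mechanism F /\ resolute F /\ symmetric_mech F.
Proof.
exists (fun p => [set canonical_matching p]); split; [|split].
- by move=> p pp mu /set1P ->; apply: canonical_matching_matching.
- by move=> p _; rewrite cards1.
- move=> p phi _ phiG.
  by rewrite /set_conj imset_set1 perm_conjE canonical_matchingJ.
Qed.
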